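(* Let $M$ be a matroid whose ground set $E$ is a nonempty finite subset of $\mathbb{N}$, and let $m = m(M) = \max E$. If $m$ is neither a loop nor a coloop of $M$, then \[ \mathcal{S}_{\mathsf{lex}}(M) \;=\; \mathcal{S}_{\mathsf{lex}}(M \backslash m)\;\cup\;\mathcal{S}_{\mathsf{lex}}(M/m)\;\cup\;\Big(m \ast \big(\mathcal{S}_{\mathsf{lex}}(M\backslash m)\cap \mathcal{S}_{\mathsf{lex}}(M/m)\big)\Big). \] If $m$ is a coloop, then $\mathcal{S}_{\mathsf{lex}}(M) = \mathcal{S}_{\mathsf{lex}}(M\backslash m)$, and if $m$ is a loop, then $\mathcal{S}_{\mathsf{lex}}(M) = \mathcal{S}_{\mathsf{lex}}(M/m)$.
   Context: For a matroid $M$ on a finite ground set $E \subset \mathbb{N}$ with set of bases $\mathcal{B}(M)$, its basis configuration is $V_M = \{\mathbf{e}_B : B \in \mathcal{B}(M)\}\subseteq\{0,1\}^E$, where $\mathbf{e}_B$ is the characteristic vector of $B$. Let $I(V_M)\subseteq \mathbb{R}[x_e : e\in E]$ be the vanishing ideal of $V_M$, and use the lexicographic term order with $x_e \succ x_f$ whenever $e<f$ (i.e. $\mathbf{x}^\alpha\succ\mathbf{x}^\beta$ iff at the smallest index where $\alpha$ and $\beta$ differ, $\alpha$ is larger). The lexicographic standard complex is $\mathcal{S}_{\mathsf{lex}}(M) = \{\tau\subseteq E : \mathbf{x}^\tau=\prod_{i\in\tau}x_i \notin \mathrm{in}(I(V_M))\}$, where $\mathrm{in}(I)$ is the initial ideal.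 (If $E=\emptyset$, $\mathcal{S}_{\mathsf{lex}}(M)=\{\emptyset\}$.) $M\backslash m$ and $M/m$ denote deletion and contraction of $m$ (matroids on $E\setminus\{m\}$). For a simplicial complex $K$ and a vertex $v$ not in $K$, the cone is $v\ast K = K\cup\{\sigma\cup\{v\}:\sigma\in K\}$. *)

From HB Require Import structures.
From mathcomp Require Import all_boot all_order all_algebra finmap.
From mathcomp Require Import mpoly.
From mathcomp Require Import reals.

Set Implicit Arguments.
Unset Strict Implicit.
Unset Printing Implicit Defensive.

Local Open Scope fset_scope.
Local Open Scope ring_scope.

Definition is_matroid (E : {fset nat}) (Bs : {fset {fset nat}}) : Prop :=
  [/\ Bs != fset0,
      (forall B, B \in Bs -> B `<=` E) &
      (forall B1 B2, B1 \in Bs -> B2 \in Bs ->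
         forall x, x \in B1 `\` B2 ->
           exists2 y, y \in B2 `\` B1 & (B1 `\ x) `|` [fset y] \in Bs)].

Definition is_loop (Bs : {fset {fset nat}}) (e : nat) : bool :=
  all (fun B : {fset nat} => e \notin B) Bs.
Definition is_coloop (Bs : {fset {fset nat}}) (e : nat) : bool :=
  all (fun B : {fset nat} => e \in B) Bs.

Definition del_bases (Bs : {fset {fset nat}}) (e : nat) : {fset {fset nat}} :=
  if is_coloop Bs e then [fset B `\ e | B in Bs]
  else [fset B in Bs | e \notin B].

Definition con_bases (Bs : {fset {fset nat}}) (e : nat) : {fset {fset nat}} :=
  if is_loop Bs e then Bs
  else [fset B `\ e | B in [fset B in Bs | e \in B]].

(* The variables of {mpoly R[#|`E|]} are indexed by 'I_#|`E|; the
   variable number i is x_e where e is the i-th smallest element of E. *)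
Definition elt_of (E : {fset nat}) (i : nat) : nat := nth 0%N (sort leq E) i.

Definition char_pt (R : realType) (E : {fset nat}) (B : {fset nat})
  : 'I_#|`E| -> R :=
  fun i => ((elt_of E i \in B) : nat)%:R.

Definition vanishing_ideal (R : realType) (E : {fset nat})
  (Bs : {fset {fset nat}}) (p : {mpoly R[#|`E|]}) : Prop :=
  forall B, B \in Bs -> p.@[@char_pt R E B] = 0.

(* Since smaller indices are
   smaller elements of E, this is lex with x_e > x_f whenever e < f. *)
Definition lex_lt (n : nat) (a b : 'X_{1..n}) : Prop :=
  exists i : 'I_n, (forall j : 'I_n, (j < i)%N -> a j = b j) /\ (a i < b i)%N.

Definition lead_mon (R : realType) (n : nat) (p : {mpoly R[n]})
  (m : 'X_{1..n}) : Prop :=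
  m \in msupp p /\ (forall m', m' \in msupp p -> m' != m -> lex_lt m' m).

Definition in_initial_ideal (R : realType) (n : nat)
  (I : {mpoly R[n]} -> Prop) (p : {mpoly R[n]}) : Prop :=
  exists (k : nat) (g s : 'I_k -> {mpoly R[n]}),
    (forall i, exists f, I f /\ exists m, lead_mon f m /\ s i = f@_m *: 'X_[m])
    /\ p = \sum_(i < k) g i * s i.

Definition sqfree_mon (E : {fset nat}) (tau : {fset nat}) : 'X_{1..#|`E|} :=
  [multinom ((elt_of E i \in tau) : nat) | i < #|`E|].

Definition complex := {fset nat} -> Prop.

Definition cunion (K L : complex) : complex := fun t => K t \/ L t.
Definition cinter (K L : complex) : complex := fun t => K t /\ L t.
Definition ccone (v : nat) (K : complex) : complex :=
  fun t => K t \/ exists2 s, K s & t = s `|` [fset v].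

Definition Slex (R : realType) (E : {fset nat}) (Bs : {fset {fset nat}})
  : complex :=
  fun tau => tau `<=` E /\
    ~ in_initial_ideal (@vanishing_ideal R E Bs) 'X_[sqfree_mon E tau].

From HB Require Import structures.
From mathcomp Require Import all_boot all_order all_algebra finmap.
From mathcomp Require Import mpoly.
From mathcomp Require Import reals boolp.

(* A squarefree monomial x^t lies in in(I(V_M)) iff some f in I(V_M) has a leading
   monomial dividing x^t.  As V_M lies in {0,1}^E, every monomial of f may be replaced
   by the product of the variables it involves, and multiplying by the missing
   variables makes x^t itself leading.  So t is a non-face of S_lex(M) iff a squarefree
   f = sum c_s x^s with every x^s lex-below or equal to x^t and c_t <> 0 vanishes on V_M.
   Since x_m is the lex-smallest variable, write f = g + x_m h with g, h free of x_m:
   f vanishes on V_M iff g vanishes at the bases avoiding m (the bases of M\m unless m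
   is a coloop) and g + h vanishes at the sets B ∖ {m} with m in B (the bases of M/m
   unless m is a loop).  Comparing leading terms, for m not in t the set t is a
   non-face for M iff it is one for both families, and s ∪ {m} is a non-face for M iff s
   is one for either family.  A loop or a coloop empties one family, and for the empty
   family every set is a non-face. *)

Set Implicit Arguments.
Unset Strict Implicit.
Unset Printing Implicit Defensive.
Import GRing.Theory.
Local Open Scope fset_scope.
Local Open Scope ring_scope.

(* The lex order of the statement, on squarefree monomials x^s and x^t. *)
Definition setlex_lt (s t : {fset nat}) : Prop :=
  exists e, [/\ e \in t, e \notin s &
                forall e', (e' < e)%N -> (e' \in s) = (e' \in t)].

Definition setlex_le (s t : {fset nat}) : Prop := s = t \/ setlex_lt s t.

Lemma setlex_lt_irr s : ~ setlex_lt s s.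
Proof. by case=> e [es /negP]. Qed.

Lemma setlex_ltUD q r t : r `<=` t -> setlex_lt q r -> setlex_lt (q `|` (t `\` r)) t.
Proof.
move=> rt [e [er eq low]]; exists e; split; first exact: (fsubsetP rt).
  by rewrite !inE er (negPf eq).
move=> e' /low; rewrite !inE => ->.
by case: (boolP (e' \in r)) => [/(fsubsetP rt) ->|]; rewrite ?orbT ?andbT.
Qed.

Section AddMax.
Variable m : nat.

Definition below (s : {fset nat}) : Prop := forall e, e \in s -> (e < m)%N.

Definition addm (a : bool) (s : {fset nat}) : {fset nat} :=
  if a then s `|` [fset m] else s.

Lemma in_addm a s e : (e \in addm a s) = (e \in s) || a && (e == m).
Proof. by case: a; rewrite /addm ?inE ?orbF. Qed.

Lemma below_notin s : below s -> m \notin s.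
Proof. by move=> ls; apply/negP=> /ls; rewrite ltnn. Qed.

Lemma addmD1 s : addm (m \in s) (s `\ m) = s.
Proof.
apply/fsetP=> e; rewrite in_addm !inE.
by case: (eqVneq e m) => [->|]; rewrite ?andbT ?andbF ?orbF.
Qed.

Lemma addmK a s : m \notin s -> addm a s `\ m = s.
Proof.
move=> ms; apply/fsetP=> e; rewrite !inE in_addm.
by case: (eqVneq e m) => [->|]; rewrite ?(negPf ms) ?andbF ?orbF.
Qed.

(* Since [m] exceeds every element of [s] and [r], it only breaks ties. *)
Lemma setlex_addm a b s r : below s -> below r ->
  setlex_lt (addm a s) (addm b r) <-> setlex_lt s r \/ s = r /\ ~~ a && b.
Proof.
move=> ls lr; have [ms mr] := (below_notin ls, below_notin lr).
have agree e : (e < m)%N -> (e \in addm a s) = (e \in s) /\ (e \in addm b r) = (e \in r).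
  by move=> /ltn_eqF em; rewrite !in_addm em !andbF !orbF.
split.
- case=> e [eb ea low]; have [em|em] := eqVneq e m.
  + subst e; move: eb ea; rewrite !in_addm (negPf mr) (negPf ms) eqxx !andbT /=.
    move=> -> ->; right; split=> //; apply/fsetP=> x.
    case: (ltnP x m) => [xm|mx]; first by have [<- <-] := agree x xm; apply: low.
    by apply/idP/idP=> [/ls|/lr]; rewrite ltnNge mx.
  + move: eb ea; rewrite !in_addm (negPf em) !andbF !orbF => eb ea.
    left; exists e; split=> // e' lt_e'; have lt_e'm := ltn_trans lt_e' (lr _ eb).
    by have [<- <-] := agree e' lt_e'm; apply: low.
- case=> [[e [eb ea low]]|[<- /andP [/negPf an ->]]].
  + have em := lr _ eb; have [es er] := agree e em.
    exists e; rewrite es er; split=> // e' lt_e'.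
    by have [-> ->] := agree e' (ltn_trans lt_e' em); apply: low.
  + exists m; rewrite !in_addm an eqxx (negPf ms) orbT; split=> // e' lt_e'.
    by rewrite !in_addm (ltn_eqF lt_e') !andbF.
Qed.

Lemma setlex_le_addm a b s r : below s -> below r ->
  setlex_le (addm a s) (addm b r) <-> setlex_lt s r \/ s = r /\ (a ==> b).
Proof.
move=> ls lr; have [ms mr] := (below_notin ls, below_notin lr).
have addm_eq : addm a s = addm b r <-> s = r /\ a = b.
  split=> [e|[-> ->] //]; split; first by rewrite -(addmK a ms) -(addmK b mr) e.
  by move/fsetP/(_ m): e; rewrite !in_addm eqxx !andbT (negPf ms) (negPf mr).
rewrite /setlex_le setlex_addm // {}addm_eq.
by case: a; case: b => /=; intuition.
Qed.

End AddMax.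

(* The pairs (s, c) of a list stand for the terms c x^s of a squarefree polynomial;
   [sfeval f B] is its value at the characteristic vector of [B]. *)
Notation sfpoly R := (seq ({fset nat} * R)).

Section SquarefreePolynomials.
Variable R : ringType.
Implicit Types (f g : sfpoly R) (s t B d : {fset nat}).

Definition sfeval f B : R := \sum_(p <- f | p.1 `<=` B) p.2.
Definition sfcoef f t : R := \sum_(p <- f | p.1 == t) p.2.

Definition sfmap (h : {fset nat} -> {fset nat}) f : sfpoly R :=
  [seq (h p.1, p.2) | p <- f].
Definition sfscale (k : R) f : sfpoly R := [seq (p.1, k * p.2) | p <- f].
Definition sfshift d f : sfpoly R := sfmap (fun s => s `|` d) f.
Definition sfdrop t f : sfpoly R := [seq p <- f | p.1 != t].

Lemma sfeval_cat f g B : sfeval (f ++ g) B = sfeval f B + sfeval g B.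
Proof. exact: big_cat. Qed.

Lemma sfcoef_cat f g t : sfcoef (f ++ g) t = sfcoef f t + sfcoef g t.
Proof. exact: big_cat. Qed.

Lemma sfeval_scale k f B : sfeval (sfscale k f) B = k * sfeval f B.
Proof. by rewrite /sfeval big_map mulr_sumr. Qed.

Lemma sfcoef_scale k f t : sfcoef (sfscale k f) t = k * sfcoef f t.
Proof. by rewrite /sfcoef big_map mulr_sumr. Qed.

Lemma sfeval_perm f g B : perm_eq f g -> sfeval f B = sfeval g B.
Proof. exact: perm_big. Qed.

Lemma sfcoef_perm f g t : perm_eq f g -> sfcoef f t = sfcoef g t.
Proof. exact: perm_big. Qed.

Lemma mem_sfscale k f p :
  p \in sfscale k f -> exists2 q, q \in f & p.1 = q.1.
Proof. by case/mapP=> q qf ->; exists q. Qed.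

Lemma sfeval_map h f B B' : {in f, forall p, (h p.1 `<=` B) = (p.1 `<=` B')} ->
  sfeval (sfmap h f) B = sfeval f B'.
Proof.
move=> hf; rewrite /sfeval big_map big_seq_cond [RHS]big_seq_cond.
by apply: eq_bigl => p; case: (boolP (p \in f)) => //= /hf.
Qed.

Lemma sfcoef_map h f t r : {in f, forall p, (h p.1 == t) = (p.1 == r)} ->
  sfcoef (sfmap h f) t = sfcoef f r.
Proof.
move=> hf; rewrite /sfcoef big_map big_seq_cond [RHS]big_seq_cond.
by apply: eq_bigl => p; case: (boolP (p \in f)) => //= /hf.
Qed.

Lemma sfeval_shift d f B : sfeval (sfshift d f) B = if d `<=` B then sfeval f B else 0.
Proof.
rewrite /sfeval big_map; case: ifP => dB.
  by apply: eq_bigl => p; rewrite fsubUset dB andbT.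
by rewrite big_pred0 // => p; rewrite fsubUset dB andbF.
Qed.

Lemma sfcoef_eq0 f t : {in f, forall p, p.1 != t} -> sfcoef f t = 0.
Proof. by move=> hf; rewrite /sfcoef big_seq_cond big1 // => p /andP [/hf /negPf ->]. Qed.

Lemma sfeval_drop t f B : sfcoef f t = 0 -> sfeval (sfdrop t f) B = sfeval f B.
Proof.
move=> ft0; rewrite /sfeval big_filter_cond [RHS](bigID (fun p => p.1 == t)) /=.
have -> : \sum_(p <- f | (p.1 `<=` B) && (p.1 == t)) p.2 = 0.
  case: (boolP (t `<=` B)) => tB; last first.
    by rewrite big_pred0 // => p; case: eqP => [->|]; rewrite ?(negPf tB) ?andbF.
  by rewrite -[RHS]ft0; apply: eq_bigl => p; case: eqP => [->|]; rewrite ?tB ?andbF.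
by rewrite add0r; apply: eq_bigl => p; rewrite andbC.
Qed.

End SquarefreePolynomials.

Section SplitAt.
Variables (R : ringType) (m : nat).
Implicit Types (f : sfpoly R) (s t B : {fset nat}).

Definition sffree f : sfpoly R := [seq p <- f | m \notin p.1].
Definition sfquot f : sfpoly R := sfmap (fun s => s `\ m) [seq p <- f | m \in p.1].

Definition avoids f : Prop := forall p : {fset nat} * R, p \in f -> m \notin p.1.

Lemma sffree_avoids f : avoids (sffree f).
Proof. by move=> p; rewrite mem_filter => /andP []. Qed.

Lemma sfquot_avoids f : avoids (sfquot f).
Proof. by move=> _ /mapP [p _ ->]; rewrite !inE eqxx. Qed.

Lemma sf_split f : perm_eq f (sffree f ++ sfshift [fset m] (sfquot f)).
Proof.
have -> : sfshift [fset m] (sfquot f) = [seq p <- f | m \in p.1].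
  rewrite /sfshift /sfquot /sfmap -map_comp map_id_in // => -[s c].
  by rewrite mem_filter => /andP [ms _] /=; rewrite fsetUC fsetD1K.
by rewrite perm_sym perm_catC (perm_filterC (fun p : {fset nat} * R => m \in p.1)).
Qed.

Lemma sfeval_split f B : sfeval f B =
  sfeval (sffree f) B + (if m \in B then sfeval (sfquot f) B else 0).
Proof. by rewrite (sfeval_perm _ (sf_split f)) sfeval_cat sfeval_shift fsub1set. Qed.

Lemma sfcoef_split f t :
  sfcoef f t = sfcoef (sffree f) t + sfcoef (sfshift [fset m] (sfquot f)) t.
Proof. by rewrite (sfcoef_perm _ (sf_split f)) sfcoef_cat. Qed.

Lemma sfeval_D1 f B : avoids f -> sfeval f (B `\ m) = sfeval f B.
Proof.
move=> fm; rewrite /sfeval big_seq_cond [RHS]big_seq_cond; apply: eq_bigl => p.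
by case: (boolP (p \in f)) => //= /fm mp; rewrite fsubsetD1 mp andbT.
Qed.

Lemma sfcoef_shift_notin f t : m \notin t -> sfcoef (sfshift [fset m] f) t = 0.
Proof.
move=> mt; apply: sfcoef_eq0 => _ /mapP [p _ ->] /=.
by apply: contraNneq mt => <-; rewrite !inE eqxx orbT.
Qed.

Lemma sfcoef_avoids f s : avoids f -> sfcoef f (s `|` [fset m]) = 0.
Proof.
move=> fm; apply: sfcoef_eq0 => p /fm.
by apply: contraNneq => ->; rewrite !inE eqxx orbT.
Qed.

Lemma sfcoef_shift f s : avoids f -> m \notin s ->
  sfcoef (sfshift [fset m] f) (s `|` [fset m]) = sfcoef f s.
Proof.
move=> fm ms; apply: sfcoef_map => p /fm mp; apply/eqP/eqP => [|-> //].
by move/(congr1 (fun r => r `\ m)); rewrite !(fsetUC _ [fset m]) !fsetU1K.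
Qed.

End SplitAt.

(* [del_bases] and [con_bases] without their loop/coloop case split. *)
Definition del_fam (P : {fset {fset nat}}) (m : nat) : {fset {fset nat}} :=
  [fset B in P | m \notin B].
Definition con_fam (P : {fset {fset nat}}) (m : nat) : {fset {fset nat}} :=
  [fset B `\ m | B in [fset B in P | m \in B]].

Definition lex_supported (R : ringType) (E t : {fset nat}) (f : sfpoly R) : Prop :=
  forall p, p \in f -> p.1 `<=` E /\ setlex_le p.1 t.

Definition vanishes_on (R : ringType) (P : {fset {fset nat}}) (f : sfpoly R) : Prop :=
  forall B, B \in P -> sfeval f B = 0.

(* By [Slex_sf_leading], the non-faces of S_lex. *)
Definition sf_leading (R : ringType) (E : {fset nat}) (P : {fset {fset nat}})
    (t : {fset nat}) : Prop :=
  exists f : sfpoly R, [/\ lex_supported E t f, sfcoef f t != 0 & vanishes_on P f].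

Lemma sf_leading_empty (R : ringType) E t : t `<=` E -> sf_leading R E fset0 t.
Proof.
move=> tE; exists [:: (t, 1)]; split=> [p|| B] //.
- by rewrite inE => /eqP -> /=; split; [|left].
- by rewrite /sfcoef big_cons big_nil eqxx addr0 oner_eq0.
Qed.

Lemma sf_leading_lift (R : ringType) E P r t : r `<=` t -> t `<=` E ->
  sf_leading R E P r -> sf_leading R E P t.
Proof.
move=> rt tE [f [fs fc fP]]; exists (sfshift (t `\` r) f).
have rd : r `|` (t `\` r) = t by rewrite -{2}(fsetID r t) (fsetIidPr rt).
split.
- move=> _ /mapP [p /fs [pE pr] ->] /=; split.
    by rewrite fsubUset pE (fsubset_trans (fsubsetDl _ _) tE).
  by case: pr => [->|pr]; [left | right; apply: setlex_ltUD].
- rewrite (sfcoef_map (r := r)) // => p /fs [_ [->|pr]]; first by rewrite rd !eqxx.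
  have /negPf -> : p.1 != r by apply/eqP=> pr'; rewrite pr' in pr; apply: setlex_lt_irr pr.
  by apply/negbTE/eqP=> e; move: (setlex_ltUD rt pr); rewrite e; apply: setlex_lt_irr.
- by move=> B BP; rewrite sfeval_shift fP ?if_same.
Qed.

Section DeletionContraction.
Variables (E : {fset nat}) (m : nat).
Hypotheses (mE : m \in E) (m_max : forall e, e \in E -> (e <= m)%N).
Implicit Types (P : {fset {fset nat}}) (s t B : {fset nat}).

Lemma below_sub s : s `<=` E `\ m -> below m s.
Proof.
move=> /fsubsetP sE e /sE; rewrite !inE => /andP [em eE].
by rewrite ltn_neqAle em m_max.
Qed.

Lemma notin_sub s : s `<=` E `\ m -> m \notin s.
Proof. by move/below_sub/below_notin. Qed.

Lemma subUm_sub s : s `<=` E `\ m -> s `|` [fset m] `<=` E.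
Proof. by move=> sE; rewrite fsubUset fsub1set mE (fsubset_trans sE) ?fsubD1set. Qed.

Lemma lex_supported_avoids (R : ringType) s (f : sfpoly R) :
  lex_supported (E `\ m) s f -> avoids m f.
Proof. by move=> fs p /fs [/notin_sub]. Qed.

Lemma lex_supported_shift (R : ringType) s (f : sfpoly R) :
  s `<=` E `\ m -> lex_supported (E `\ m) s f ->
  lex_supported E (s `|` [fset m]) (sfshift [fset m] f).
Proof.
move=> sE fs _ /mapP [p /fs [pE ps] ->] /=; split; first exact: subUm_sub.
by apply/(setlex_le_addm true true (below_sub pE) (below_sub sE)); case: ps; auto.
Qed.

Lemma sf_leading_del (R : ringType) P t : t `<=` E `\ m -> sf_leading R E P t ->
  sf_leading R (E `\ m) (del_fam P m) t.
Proof.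
move=> tE [f [fs fc fP]]; exists (sffree m f); split.
- move=> p; rewrite mem_filter => /andP [mp /fs [pE pt]].
  by rewrite fsubsetD1 pE mp.
- by move: fc; rewrite (sfcoef_split m) sfcoef_shift_notin ?addr0 ?notin_sub.
- move=> B; rewrite !inE => /andP [/fP + mB].
  by rewrite (sfeval_split m) (negPf mB) addr0.
Qed.

Lemma setlex_le_D1 s t : s `<=` E -> t `<=` E `\ m -> setlex_le s t ->
  setlex_le (s `\ m) t /\ (s `\ m = t -> s = t).
Proof.
move=> sE tE; rewrite -{1}(addmD1 m s).
have := setlex_le_addm (m \in s) false (below_sub (fsetSD _ sE)) (below_sub tE).
move=> /[apply] -[st|[st ms]]; split; try by [right | left].
- by move=> ts; rewrite ts in st; case: (setlex_lt_irr st).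
- by move: ms; rewrite implybF => /(addmK false) /= ->.
Qed.

Lemma fsubsetD1D1 s B : m \in B -> (s `\ m `<=` B `\ m) = (s `<=` B).
Proof. by move=> mB; rewrite fsubsetD1 fsubDset mem_fset1U // !inE eqxx andbT. Qed.

Lemma sf_leading_con (R : ringType) P t : t `<=` E `\ m -> sf_leading R E P t ->
  sf_leading R (E `\ m) (con_fam P m) t.
Proof.
move=> tE [f [fs fc fP]]; exists (sfmap (fun s => s `\ m) f); split.
- move=> _ /mapP [p /fs [pE pt] ->] /=.
  by rewrite fsetSD //; case: (setlex_le_D1 pE tE pt).
- rewrite (sfcoef_map (r := t)) // => p /fs [pE pt].
  apply/eqP/eqP=> [|->]; first by case: (setlex_le_D1 pE tE pt).
  exact: (addmK false (notin_sub tE)).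
- move=> _ /imfsetP [B + ->]; rewrite !inE => /andP [BP mB].
  by rewrite (sfeval_map (B' := B)) ?fP // => p _; rewrite fsubsetD1D1.
Qed.

(* The witness is f0 + x_m h, where h = c f1 - f0 with c chosen to cancel the
   x^t-coefficient; that term is then dropped from h. *)
Lemma sf_leading_del_con (R : fieldType) P t : t `<=` E `\ m ->
  sf_leading R (E `\ m) (del_fam P m) t -> sf_leading R (E `\ m) (con_fam P m) t ->
  sf_leading R E P t.
Proof.
move=> tE [f0 [f0s f0c f0P]] [f1 [f1s f1c f1P]].
pose c := sfcoef f0 t / sfcoef f1 t.
pose h0 := sfscale c f1 ++ sfscale (-1) f0.
have h0c : sfcoef h0 t = 0 by rewrite sfcoef_cat !sfcoef_scale divfK // mulN1r subrr.
have h0s : lex_supported (E `\ m) t h0.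
  move=> p; rewrite mem_cat => /orP [] /mem_sfscale [q /[swap] ->].
    exact: f1s.
  exact: f0s.
exists (f0 ++ sfshift [fset m] (sfdrop t h0)); split.
- move=> p; rewrite mem_cat => /orP [/f0s [pE pt]|/mapP [q]].
    by rewrite (fsubset_trans pE) ?fsubD1set.
  rewrite mem_filter => /andP [qt /h0s [qE qle]] -> /=.
  have qlt : setlex_lt q.1 t by case: qle => // qt'; rewrite qt' eqxx in qt.
  split; first exact: subUm_sub.
  by right; apply/(setlex_addm true false (below_sub qE) (below_sub tE)); left.
- by rewrite sfcoef_cat sfcoef_shift_notin ?addr0 ?notin_sub.
- move=> B BP; rewrite sfeval_cat sfeval_shift fsub1set.
  case: (boolP (m \in B)) => mB; last by rewrite addr0 f0P // !inE BP.
  rewrite sfeval_drop // sfeval_cat !sfeval_scale mulN1r addrCA subrr addr0.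
  rewrite -(sfeval_D1 _ (lex_supported_avoids f1s)) f1P ?mulr0 //.
  by apply/imfsetP; exists B; rewrite // !inE BP.
Qed.

Lemma sf_leading_del_addm (R : ringType) P s : s `<=` E `\ m ->
  sf_leading R (E `\ m) (del_fam P m) s -> sf_leading R E P (s `|` [fset m]).
Proof.
move=> sE [g [gs gc gP]].
exists (g ++ sfshift [fset m] (sfscale (-1) g)); split.
- move=> p; rewrite mem_cat => /orP [/gs [pE ps]|].
    split; first by rewrite (fsubset_trans pE) ?fsubD1set.
    by right; apply/(setlex_addm false true (below_sub pE) (below_sub sE)); case: ps; auto.
  apply: (lex_supported_shift sE) => q /mem_sfscale [r /gs + ->]; exact.
- rewrite sfcoef_cat (sfcoef_avoids _ (lex_supported_avoids gs)) add0r.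
  rewrite sfcoef_shift ?notin_sub ?sfcoef_scale ?mulN1r ?oppr_eq0 //.
  by move=> _ /mem_sfscale [q /(lex_supported_avoids gs) + ->].
- move=> B BP; rewrite sfeval_cat sfeval_shift fsub1set sfeval_scale.
  case: (boolP (m \in B)) => mB; first by rewrite mulN1r subrr.
  by rewrite addr0 gP // !inE BP.
Qed.

Lemma sf_leading_con_addm (R : ringType) P s : s `<=` E `\ m ->
  sf_leading R (E `\ m) (con_fam P m) s -> sf_leading R E P (s `|` [fset m]).
Proof.
move=> sE [g [gs gc gP]]; exists (sfshift [fset m] g); split.
- exact: lex_supported_shift.
- by rewrite (sfcoef_shift (lex_supported_avoids gs)) ?notin_sub.
- move=> B BP; rewrite sfeval_shift fsub1set; case: ifP => // mB.
  rewrite -(sfeval_D1 _ (lex_supported_avoids gs)) gP //.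
  by apply/imfsetP; exists B; rewrite // !inE BP.
Qed.

Lemma lex_supported_sffree (R : ringType) s (f : sfpoly R) : s `<=` E `\ m ->
  lex_supported E (s `|` [fset m]) f -> lex_supported (E `\ m) s (sffree m f).
Proof.
move=> sE fs p; rewrite mem_filter => /andP [mp /fs [pE ps]].
have pE' : p.1 `<=` E `\ m by rewrite fsubsetD1 pE mp.
split=> //; move: ps.
by case/(setlex_le_addm false true (below_sub pE') (below_sub sE)) => [|[]]; [right | left].
Qed.

Lemma lex_supported_sfquot (R : ringType) s (f : sfpoly R) : s `<=` E `\ m ->
  lex_supported E (s `|` [fset m]) f -> lex_supported (E `\ m) s (sfquot m f).
Proof.
move=> sE fs _ /mapP [p + ->]; rewrite mem_filter => /andP [mp /fs [pE ps]] /=.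
have pE' : p.1 `\ m `<=` E `\ m by rewrite fsetSD.
split=> //; move: ps; rewrite -{1}(addmD1 m p.1) mp.
by case/(setlex_le_addm true true (below_sub pE') (below_sub sE)) => [|[]]; [right | left].
Qed.

(* Write f = g + x_m h: if x^s survives in g, then g is a witness for [del_fam P m];
   otherwise g + h is one for [con_fam P m]. *)
Lemma sf_leading_addm_split (R : ringType) P s : s `<=` E `\ m ->
  sf_leading R E P (s `|` [fset m]) ->
  sf_leading R (E `\ m) (del_fam P m) s \/ sf_leading R (E `\ m) (con_fam P m) s.
Proof.
move=> sE [f [fs fc fP]].
have [gs hs] := (lex_supported_sffree sE fs, lex_supported_sfquot sE fs).
have fc' : sfcoef f (s `|` [fset m]) = sfcoef (sfquot m f) s.
  rewrite (sfcoef_split m) (sfcoef_avoids _ (@sffree_avoids _ m f)) add0r.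
  by rewrite (sfcoef_shift (@sfquot_avoids _ m f)) ?notin_sub.
have [g0|g0] := eqVneq (sfcoef (sffree m f) s) 0; [right | left].
- exists (sffree m f ++ sfquot m f); split.
  + by move=> p; rewrite mem_cat => /orP [/gs|/hs].
  + by rewrite sfcoef_cat g0 add0r -fc'.
  + move=> _ /imfsetP [B + ->]; rewrite !inE => /andP [BP mB].
    rewrite sfeval_cat (sfeval_D1 _ (@sffree_avoids _ m f)).
    rewrite (sfeval_D1 _ (@sfquot_avoids _ m f)).
    by move: (fP B BP); rewrite (sfeval_split m) mB.
- exists (sffree m f); split=> // B; rewrite !inE => /andP [BP mB].
  by move: (fP B BP); rewrite (sfeval_split m) (negPf mB) addr0.
Qed.

Lemma sf_leading_addm (R : ringType) P s : s `<=` E `\ m ->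
  sf_leading R E P (s `|` [fset m]) <->
  sf_leading R (E `\ m) (del_fam P m) s \/ sf_leading R (E `\ m) (con_fam P m) s.
Proof.
move=> sE; split; first exact: sf_leading_addm_split.
by case; [apply: sf_leading_del_addm | apply: sf_leading_con_addm].
Qed.

Lemma sf_leading_avoid (R : fieldType) P t : t `<=` E `\ m ->
  sf_leading R E P t <->
  sf_leading R (E `\ m) (del_fam P m) t /\ sf_leading R (E `\ m) (con_fam P m) t.
Proof.
move=> tE; split=> [ft|[]]; last exact: sf_leading_del_con.
by split; [apply: sf_leading_del | apply: sf_leading_con].
Qed.

End DeletionContraction.

Section SquarefreeMonomials.
Variable E : {fset nat}.
Local Notation n := #|`E|.
Local Notation elt := (elt_of E).

Lemma elt_of_in (i : 'I_n) : elt i \in E.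
Proof. by rewrite /elt_of -(mem_sort leq) mem_nth // size_sort. Qed.

Lemma elt_of_lt (i j : 'I_n) : (elt i < elt j)%N = (i < j)%N.
Proof.
have sorted_E : sorted ltn (sort leq E).
  by have := Order.TotalTheory.sort_lt_sorted E; rewrite fset_uniq.
by apply: (Order.POrderTheory.lt_sorted_ltn_nth 0%N sorted_E); rewrite inE size_sort.
Qed.

Lemma elt_of_inj : injective (fun i : 'I_n => elt i).
Proof.
move=> i j /= eij; apply/val_inj.
by case: (ltngtP i j) => // h; move: h; rewrite -elt_of_lt eij ltnn.
Qed.

Lemma elt_of_onto e : e \in E -> exists i : 'I_n, elt i = e.
Proof.
move=> eE; have ie : (index e (sort leq E) < n)%N.
  by rewrite -(size_sort leq) index_mem mem_sort.
by exists (Ordinal ie); rewrite /elt_of /= nth_index // mem_sort.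
Qed.

Definition mnmsupp (mm : 'X_{1..n}) : {fset nat} :=
  [fset e in E | [exists i : 'I_n, (mm i != 0%N) && (elt i == e)]].

Lemma mem_mnmsupp mm (i : 'I_n) : (elt i \in mnmsupp mm) = (mm i != 0%N).
Proof.
rewrite !inE elt_of_in /=; apply/existsP/idP => [[j /andP [mj /eqP /elt_of_inj <-]] //|mi].
by exists i; rewrite mi eqxx.
Qed.

Lemma mnmsupp_sub mm : mnmsupp mm `<=` E.
Proof. by apply/fsubsetP => e; rewrite !inE => /andP []. Qed.

Lemma mnmsuppP mm e : e \in mnmsupp mm -> exists2 i : 'I_n, elt i = e & mm i != 0%N.
Proof.
move=> es; have [i ei] := elt_of_onto (fsubsetP (mnmsupp_sub mm) e es).
by exists i; rewrite // -mem_mnmsupp ei.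
Qed.

Lemma sqfree_monE t (i : 'I_n) : sqfree_mon E t i = (elt i \in t) :> nat.
Proof. by rewrite /sqfree_mon mnmE. Qed.

Lemma mnmsupp_sqfree t : t `<=` E -> mnmsupp (sqfree_mon E t) = t.
Proof.
move=> tE; apply/fsetP => e; case: (boolP (e \in E)) => eE; last first.
  by apply/idP/idP => [/(fsubsetP (mnmsupp_sub _))|/(fsubsetP tE)]; rewrite (negPf eE).
have [i <-] := elt_of_onto eE.
by rewrite mem_mnmsupp sqfree_monE; case: (elt i \in t).
Qed.

Lemma sqfree_mon_inj s t : s `<=` E -> t `<=` E -> sqfree_mon E s = sqfree_mon E t -> s = t.
Proof. by move=> sE tE e; rewrite -(mnmsupp_sqfree sE) -(mnmsupp_sqfree tE) e. Qed.

Lemma meval_char_pt (R : realType) mm B :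
  ('X_[mm]).@[@char_pt R E B] = (mnmsupp mm `<=` B)%:R.
Proof.
rewrite mevalX /char_pt; case: (boolP (mnmsupp mm `<=` B)) => [/fsubsetP sB|].
  rewrite big1 // => i _; case: (eqVneq (mm i) 0%N) => [->|mi]; first by rewrite expr0.
  by rewrite sB ?mem_mnmsupp // expr1n.
case/fsubsetPn => _ /mnmsuppP [i <- mi] eB.
by rewrite (bigD1 i) //= (negPf eB) expr0n (negPf mi) mul0r.
Qed.

Lemma lex_lt_sqfree_mon s t : s `<=` E -> t `<=` E -> setlex_lt s t ->
  lex_lt (sqfree_mon E s) (sqfree_mon E t).
Proof.
move=> sE tE [e [et es low]]; have [i ei] := elt_of_onto (fsubsetP tE e et).
exists i; split; last by rewrite !sqfree_monE ei et (negPf es).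
by move=> j ji; rewrite !sqfree_monE low // -ei elt_of_lt.
Qed.

Lemma setlex_lt_mnmsupp a b : lex_lt a b -> (forall i, (b i <= 1)%N) ->
  setlex_lt (mnmsupp a) (mnmsupp b).
Proof.
move=> [i [low ab]] b1; exists (elt i); split.
- by rewrite mem_mnmsupp -lt0n (leq_ltn_trans _ ab).
- by rewrite mem_mnmsupp negbK; move: ab (b1 i); case: (b i) => [|[|]] //; case: (a i).
- move=> e lt_e; case: (boolP (e \in E)) => eE; last first.
    by apply/idP/idP => /(fsubsetP (mnmsupp_sub _)); rewrite (negPf eE).
  have [j ej] := elt_of_onto eE; move: lt_e; rewrite -ej elt_of_lt => ji.
  by rewrite !mem_mnmsupp low.
Qed.

End SquarefreeMonomials.

Lemma sum_neq0_has (R : ringType) (T : eqType) (r : seq T) (Q : pred T) (F : T -> R) :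
  \sum_(x <- r | Q x) F x != 0 -> has (fun x => Q x && (F x != 0)) r.
Proof.
apply: contraNT => /hasPn hr; rewrite big_seq_cond big1 // => x /andP [/hr].
by rewrite negb_and => /orP [/negPf -> | /negPn /eqP].
Qed.

Section InitialIdeal.
Variables (R : realType) (E : {fset nat}) (P : {fset {fset nat}}).
Local Notation n := #|`E|.
Local Notation sq := (sqfree_mon E).
Local Notation I := (@vanishing_ideal R E P).

Lemma sf_leading_initial t : t `<=` E -> sf_leading R E P t ->
  in_initial_ideal I 'X_[sq t].
Proof.
move=> tE [L [Ls Lc LP]].
pose f : {mpoly R[n]} := \sum_(p <- L) p.2 *: 'X_[sq p.1].
have fE mm : f@_mm = \sum_(p <- L | sq p.1 == mm) p.2.
  rewrite /f raddf_sum /= [RHS]big_mkcond; apply: eq_bigr => p _.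
  by rewrite mcoeffZ mcoeffX; case: (sq p.1 == mm); rewrite ?mulr1 ?mulr0.
have ft : f@_(sq t) = sfcoef L t.
  rewrite fE /sfcoef big_seq_cond [RHS]big_seq_cond; apply: eq_bigl => p.
  case: (boolP (p \in L)) => //= /Ls [pE _].
  by apply/eqP/eqP => [/(sqfree_mon_inj pE tE)|->].
have fI : I f.
  move=> B BP; rewrite -[RHS](LP B BP) /f raddf_sum /= /sfeval [RHS]big_mkcond.
  rewrite big_seq [RHS]big_seq; apply: eq_bigr => p /Ls [pE _].
  rewrite mevalZ meval_char_pt mnmsupp_sqfree //.
  by case: (p.1 `<=` B); rewrite ?mulr1 ?mulr0.
have fl : lead_mon f (sq t).
  split=> [|mm]; first by rewrite mcoeff_msupp ft.
  rewrite mcoeff_msupp fE => /sum_neq0_has /hasP [p pL /andP [/eqP <- _]] ne.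
  have [pE [pt|pt]] := Ls p pL; first by rewrite pt eqxx in ne.
  exact: lex_lt_sqfree_mon.
exists 1%N, (fun _ => (f@_(sq t))^-1%:MP), (fun _ => f@_(sq t) *: 'X_[sq t]); split.
  by move=> _; exists f; split=> //; exists (sq t).
by rewrite big_ord1 mul_mpolyC scalerA mulVf ?scale1r // ft.
Qed.

(* On 0/1 points a monomial agrees with the product of the variables it involves. *)
Lemma lead_mon_sf_leading (f : {mpoly R[n]}) mm : I f -> lead_mon f mm ->
  (forall i, (mm i <= 1)%N) -> sf_leading R E P (mnmsupp mm).
Proof.
move=> fI [mmf lead] mm1; exists [seq (mnmsupp mm', f@_mm') | mm' <- msupp f]; split.
- move=> _ /mapP [mm' mf ->] /=; split; first exact: mnmsupp_sub.
  have [->|ne] := eqVneq mm' mm; first by left.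
  by right; apply: setlex_lt_mnmsupp => //; apply: lead.
- have -> : sfcoef [seq (mnmsupp mm', f@_mm') | mm' <- msupp f] (mnmsupp mm) =
            \sum_(mm' <- msupp f | mm' == mm) f@_mm'.
    rewrite /sfcoef big_map big_seq_cond [RHS]big_seq_cond; apply: eq_bigl => x /=.
    case: (boolP (x \in msupp f)) => //= xf.
    have [->|ne] := eqVneq x mm; first by rewrite eqxx.
    apply/negP => /eqP e; have := setlex_lt_mnmsupp (lead x xf ne) mm1.
    by rewrite e => /setlex_lt_irr.
  rewrite big_mkcond (bigD1_seq mm) //= ?msupp_uniq // eqxx big1 ?addr0.
    by rewrite -mcoeff_msupp.
  by move=> x /negPf ->.
- move=> B BP; rewrite -(fI B BP) mevalE /sfeval big_map big_mkcond.
  apply: eq_bigr => x _; rewrite -mevalX meval_char_pt.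
  by case: (mnmsupp x `<=` B); rewrite ?mulr1 ?mulr0.
Qed.

(* Some g_i s_i has x^t in its support, so the leading monomial of the corresponding
   f divides x^t. *)
Lemma initial_sf_leading t : t `<=` E -> in_initial_ideal I 'X_[sq t] ->
  sf_leading R E P t.
Proof.
move=> tE [k [g [s [hs gs]]]].
have := congr1 (mcoeff (sq t)) gs; rewrite mcoeffX eqxx raddf_sum /= => sum1.
have /sum_neq0_has /hasP [i _ /andP [_]] : \sum_(i < k) (g i * s i)@_(sq t) != 0.
  by rewrite -sum1 oner_eq0.
have [f [fI [mm [fl ->]]]] := hs i.
rewrite -scalerAr mcoeffZ mulf_eq0 negb_or => /andP [_].
rewrite -mcoeff_msupp (perm_mem (msuppMX _ _)) => /mapP [mm' _ tE'].
have mm_t j : (mm j <= sq t j)%N by rewrite tE' mnmDE leq_addr.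
have mm1 j : (mm j <= 1)%N by apply: leq_trans (mm_t j) _; rewrite sqfree_monE leq_b1.
apply: (sf_leading_lift _ tE (lead_mon_sf_leading fI fl mm1)).
apply/fsubsetP => _ /mnmsuppP [j <- mj].
by have := mm_t j; rewrite sqfree_monE; case: (_ \in t); rewrite // leqn0 (negPf mj).
Qed.

Lemma Slex_sf_leading t : Slex R E P t <-> t `<=` E /\ ~ sf_leading R E P t.
Proof.
split=> [[tE nI]|[tE nL]]; split=> //.
  by move/(sf_leading_initial tE).
by move/(initial_sf_leading tE).
Qed.

End InitialIdeal.

Lemma Slex_fset0 (R : realType) E t : ~ Slex R E fset0 t.
Proof. by case/Slex_sf_leading=> tE; apply; apply: sf_leading_empty. Qed.

Section SlexDeletionContraction.
Variables (R : realType) (E : {fset nat}) (P : {fset {fset nat}}) (m : nat).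
Hypotheses (mE : m \in E) (m_max : forall e, e \in E -> (e <= m)%N).
Local Notation S0 := (Slex R (E `\ m) (del_fam P m)).
Local Notation S1 := (Slex R (E `\ m) (con_fam P m)).

Lemma Slex_avoid t : m \notin t -> Slex R E P t <-> S0 t \/ S1 t.
Proof.
move=> mt; rewrite !Slex_sf_leading fsubsetD1 mt andbT.
case: (boolP (t `<=` E)) => tE; last by split=> [[]|[[]|[]]].
have tEm : t `<=` E `\ m by rewrite fsubsetD1 tE.
rewrite (sf_leading_avoid mE m_max) //.
by split=> [[_ /not_andP [h|h]]|[[_ h]|[_ h]]]; [left | right | split=> // -[] ..].
Qed.

Lemma Slex_addm s : m \notin s -> Slex R E P (s `|` [fset m]) <-> S0 s /\ S1 s.
Proof.
move=> ms; rewrite !Slex_sf_leading fsubUset fsub1set mE andbT.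
have sEm : (s `<=` E `\ m) = (s `<=` E) by rewrite fsubsetD1 ms andbT.
rewrite sEm; case: (boolP (s `<=` E)) => sE; last by split=> [[]|[[]]].
rewrite (sf_leading_addm mE m_max) ?sEm //.
split=> [[_ h]|[[_ h0] [_ h1]]]; last by split=> // -[].
by split; split=> // h'; apply: h; [left | right].
Qed.

Lemma Slex_notin t : S0 t \/ S1 t -> m \notin t.
Proof. by case=> -[/fsubsetD1P [] _]. Qed.

Lemma Slex_del_con : Slex R E P = cunion (cunion S0 S1) (ccone m (cinter S0 S1)).
Proof.
apply: funext => t; apply: propext; rewrite /cunion /ccone /cinter.
case: (boolP (m \in t)) => mt; last first.
  rewrite Slex_avoid //; split=> [h|[h|[[h _]|[s _ ts]]]]; [by left | done | by left |].
  by rewrite ts !inE eqxx orbT in mt.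
have tU : t = (t `\ m) `|` [fset m] by rewrite fsetUC fsetD1K.
rewrite {1}tU Slex_addm ?inE ?eqxx //.
split=> [h|[/Slex_notin|[[h _]|[s [h0 h1] ts]]]]; first by right; right; exists (t `\ m).
- by rewrite mt.
- by rewrite (negPf (Slex_notin (or_introl h))) in mt.
- have ms := Slex_notin (or_introl h0).
  by rewrite ts fsetUC fsetU1K.
Qed.

End SlexDeletionContraction.

Section LoopsColoops.
Variables (P : {fset {fset nat}}) (m : nat).

Lemma del_fam_coloop : is_coloop P m -> del_fam P m = fset0.
Proof.
move/allP=> col; apply/fsetP=> B; rewrite !inE.
by case: (boolP (B \in P)) => //= /col ->.
Qed.

Lemma con_fam_coloop : is_coloop P m -> con_fam P m = [fset B `\ m | B in P].
Proof.
move/allP=> col; rewrite /con_fam; have -> // : [fset B in P | m \in B] = P.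
by apply/fsetP=> B; rewrite !inE; case: (boolP (B \in P)) => //= /col ->.
Qed.

Lemma del_fam_loop : is_loop P m -> del_fam P m = P.
Proof.
move/allP=> lo; apply/fsetP=> B; rewrite !inE.
by case: (boolP (B \in P)) => //= /lo ->.
Qed.

Lemma con_fam_loop : is_loop P m -> con_fam P m = fset0.
Proof.
move/allP=> lo; apply/fsetP=> x; rewrite inE; apply/imfsetP=> -[B].
by rewrite !inE => /andP [/lo /negPf ->].
Qed.

End LoopsColoops.

Lemma cunion_cone_void_l (K L : complex) v : (forall t, ~ K t) ->
  cunion (cunion K L) (ccone v (cinter K L)) = L.
Proof. by move=> K0; apply: funext => t; apply: propext; firstorder. Qed.

Lemma cunion_cone_void_r (K L : complex) v : (forall t, ~ L t) ->
  cunion (cunion K L) (ccone v (cinter K L)) = K.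
Proof. by move=> L0; apply: funext => t; apply: propext; firstorder. Qed.

Theorem theorem1p1 (R : realType) (E : {fset nat}) (Bs : {fset {fset nat}})
  (m : nat) :
  is_matroid E Bs ->
  m \in E -> (forall e, e \in E -> (e <= m)%N) ->
  [/\ (~~ is_loop Bs m -> ~~ is_coloop Bs m ->
        Slex R E Bs =
        cunion (cunion (Slex R (E `\ m) (del_bases Bs m))
                       (Slex R (E `\ m) (con_bases Bs m)))
               (ccone m (cinter (Slex R (E `\ m) (del_bases Bs m))
                                (Slex R (E `\ m) (con_bases Bs m))))),
      (is_coloop Bs m -> Slex R E Bs = Slex R (E `\ m) (del_bases Bs m)) &
      (is_loop Bs m -> Slex R E Bs = Slex R (E `\ m) (con_bases Bs m))].
Proof.
move=> _ mE m_max; rewrite (Slex_del_con R Bs mE m_max); split.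
- by move=> nl nc; rewrite /del_bases /con_bases (negPf nl) (negPf nc).
- move=> col; rewrite /del_bases col del_fam_coloop // con_fam_coloop //.
  by apply: cunion_cone_void_l; apply: Slex_fset0.
- move=> lo; rewrite /con_bases lo del_fam_loop // con_fam_loop //.
  by apply: cunion_cone_void_r; apply: Slex_fset0.
Qed.
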